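(* Let $(\mathcal V,\mathcal W,\lambda)$ be a FTvN system with center $C$. Then (a) every subset of $C$ is a spectral set, and (b) the orthogonal complement $C^\perp$ of $C$ in $\mathcal V$ is a spectral set.
   Context: A Fan-Theobald-von Neumann (FTvN) system is a triple $(\mathcal V,\mathcal W,\lambda)$ where $\mathcal V,\mathcal W$ are real inner product spaces and $\lambda:\mathcal V\to\mathcal W$ is a map such that: (A1) $\|\lambda(x)\|=\|x\|$ for all $x$; (A2) $\langle x,y\rangle\le\langle\lambda(x),\lambda(y)\rangle$ for all $x,y$; (A3) for every $c\in\mathcal V$ and $q\in\lambda(\mathcal V)$ there exists $x$ with $\lambda(x)=q$ and $\langle c,x\rangle=\langle\lambda(c),\lambda(x)\rangle$. The $\lambda$-orbit of $u$ is $[u]=\{x:\lambda(x)=\lambda(u)\}$; a set $E$ is spectral if $x\in E\Rightarrow[x]\subseteq E$. Elements $x,y$ commute if $\langle x,y\rangle=\langle\lambda(x),\lambda(y)\rangle$; the center $C$ is the set of elements commuting with every element of $\mathcal V$. *)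

From mathcomp Require Import all_boot all_order all_algebra.
From mathcomp Require Import reals.
Set Implicit Arguments. Unset Strict Implicit. Unset Printing Implicit Defensive.
Import Order.TTheory GRing.Theory Num.Theory.
Local Open Scope ring_scope.

Section FTvN.
Variable R : realType.

Definition is_inner_product (V : lmodType R) (ip : V -> V -> R) : Prop :=
  [/\ (forall x y, ip x y = ip y x),
      (forall (a : R) (x y z : V), ip (a *: x + y) z = a * ip x z + ip y z)
    & (forall x, x != 0 -> 0 < ip x x)].

Definition ipnorm (V : lmodType R) (ip : V -> V -> R) (x : V) : R :=
  Num.sqrt (ip x x).

Definition FTvN_system (V W : lmodType R) (ipV : V -> V -> R) (ipW : W -> W -> R)
    (lam : V -> W) : Prop :=
  [/\ (forall x, ipnorm ipW (lam x) = ipnorm ipV x),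
      (forall x y, ipV x y <= ipW (lam x) (lam y))
    & (forall (c : V) (q : W), (exists d, lam d = q) ->
         exists x, lam x = q /\ ipV c x = ipW (lam c) (lam x))].

Definition orbit (V W : Type) (lam : V -> W) (u : V) : V -> Prop :=
  fun x => lam x = lam u.

Definition spectral (V W : Type) (lam : V -> W) (E : V -> Prop) : Prop :=
  forall x, E x -> forall y, orbit lam x y -> E y.

Definition commute (V W : lmodType R) (ipV : V -> V -> R) (ipW : W -> W -> R)
    (lam : V -> W) (x y : V) : Prop :=
  ipV x y = ipW (lam x) (lam y).

Definition center (V W : lmodType R) (ipV : V -> V -> R) (ipW : W -> W -> R)
    (lam : V -> W) : V -> Prop :=
  fun c => forall y, commute ipV ipW lam c y.

Definition orth_compl (V : lmodType R) (ipV : V -> V -> R) (S : V -> Prop) : V -> Prop :=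
  fun x => forall c, S c -> ipV x c = 0.

End FTvN.

(* An isometric lambda that preserves the inner product of a commuting pair x, y
   also preserves their distance: |x - y| = |lam x - lam y|.  Hence a central c
   is the only element of its orbit, so every set of central elements is
   spectral.  And a central c pairs with any y exactly as lam c pairs with lam y,
   so <y, c> depends only on lam y and the orthogonality conditions defining the
   complement of the center are orbit-invariant. *)

From Pilot Require Import Defs.
From mathcomp Require Import all_boot all_order all_algebra.
From mathcomp Require Import reals.
Import Order.TTheory GRing.Theory Num.Theory.
Local Open Scope ring_scope.

Section InnerProduct.
Context {R : realType} {V : lmodType R} {ip : V -> V -> R}.
Hypothesis ip_inner : is_inner_product ip.

Lemma ip0l z : ip 0 z = 0.
Proof.
have [_ ip_linear _] := ip_inner.
have := ip_linear 1 0 0 z; rewrite scaler0 addr0 mul1r => ip00.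
by apply: (addIr (ip 0 z)); rewrite add0r -ip00.
Qed.

Lemma ipBl x y z : ip (x - y) z = ip x z - ip y z.
Proof.
have [_ ip_linear _] := ip_inner.
by rewrite addrC -scaleN1r ip_linear mulN1r addrC.
Qed.

Lemma ipBr x y z : ip z (x - y) = ip z x - ip z y.
Proof. by have [ip_sym _ _] := ip_inner; rewrite ip_sym ipBl !(ip_sym z). Qed.

Lemma ip_self_ge0 x : 0 <= ip x x.
Proof.
have [_ _ ip_pos] := ip_inner.
by have [->|x_neq0] := eqVneq x 0; [rewrite ip0l | exact/ltW/ip_pos].
Qed.

Lemma ip_self_eq0 x : ip x x = 0 -> x = 0.
Proof.
have [_ _ ip_pos] := ip_inner.
by have [//|x_neq0] := eqVneq x 0; have := ip_pos x x_neq0 => /gt_eqF/eqP.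
Qed.

Lemma ipnorm_sqr x : ipnorm ip x ^+ 2 = ip x x.
Proof. exact/sqr_sqrtr/ip_self_ge0. Qed.

End InnerProduct.

Section Isometry.
Context {R : realType} {V W : lmodType R}.
Context {ipV : V -> V -> R} {ipW : W -> W -> R} {lam : V -> W}.
Hypotheses (ipV_inner : is_inner_product ipV) (ipW_inner : is_inner_product ipW).
Hypothesis ipnorm_lam : forall x, ipnorm ipW (lam x) = ipnorm ipV x.

Lemma ip_lam_self x : ipW (lam x) (lam x) = ipV x x.
Proof. by rewrite -!ipnorm_sqr // ipnorm_lam. Qed.

Lemma commute_ip_sub x y : Defs.commute ipV ipW lam x y ->
  ipV (x - y) (x - y) = ipW (lam x - lam y) (lam x - lam y).
Proof.
have [ipV_sym _ _] := ipV_inner; have [ipW_sym _ _] := ipW_inner.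
rewrite /Defs.commute => xy.
rewrite !ipBl // !ipBr // (ipV_sym y) (ipW_sym (lam y)) xy.
by rewrite !ip_lam_self.
Qed.

Lemma commute_lam_inj x y : Defs.commute ipV ipW lam x y -> lam x = lam y -> x = y.
Proof.
move=> xy lam_xy; apply/eqP; rewrite -subr_eq0; apply/eqP.
by apply: (ip_self_eq0 ipV_inner); rewrite commute_ip_sub // lam_xy subrr ip0l.
Qed.

Lemma center_orbit c y : center ipV ipW lam c -> Defs.orbit lam c y -> y = c.
Proof. by move=> c_central cy; apply/esym/(commute_lam_inj c y (c_central y)); rewrite cy. Qed.

Lemma center_ip_orbit c x y : center ipV ipW lam c -> Defs.orbit lam x y ->
  ipV y c = ipV x c.
Proof.
have [ipV_sym _ _] := ipV_inner; move=> c_central xy.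
by rewrite ipV_sym c_central xy -c_central ipV_sym.
Qed.

End Isometry.

Theorem proposition6p5 (R : realType) (V W : lmodType R)
    (ipV : V -> V -> R) (ipW : W -> W -> R) (lam : V -> W) :
  is_inner_product ipV -> is_inner_product ipW ->
  FTvN_system ipV ipW lam ->
  (forall E : V -> Prop, (forall x, E x -> center ipV ipW lam x) ->
     spectral lam E) /\
  spectral lam (orth_compl ipV (center ipV ipW lam)).
Proof.
move=> ipV_inner ipW_inner [ipnorm_lam _ _]; split.
- move=> E E_central x Ex y xy.
  by rewrite (center_orbit ipV_inner ipW_inner ipnorm_lam x y (E_central x Ex) xy).
- move=> x x_perp y xy c c_central.
  by rewrite (center_ip_orbit ipV_inner c x y c_central xy) x_perp.
Qed.
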